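(* Let $\ell$ be a positive integer and $L\ge2$. For every $(p,n,\ell)$-simple-labelling $\tilde M$ of an $L$-graph, $\tilde\Delta(\tilde M)\ge0$.
   Context: An $L$-graph is a cycle with $2L$ vertices and $2L$ edges whose vertices alternate between $n$-vertices and $p$-vertices. A $(p,n,\ell)$-simple-labelling assigns an $n$-label in $[n]$ to each $n$-vertex and to each $p$-vertex either an $\ell$-tuple of elements of $[p]$ or the empty label $\emptyset$, such that: (i) $n$-labels of adjacent $n$-vertices (consecutive $n$-vertices along the cycle, separated by one $p$-vertex) are distinct; (ii) the $p$-labels in an $\ell$-tuple are distinct; (iii) for each $n$-label $i$ and $p$-label $j$, the number of edges whose $n$-endpoint is labelled $i$ and whose $p$-endpoint's tuple contains $j$ is even; (iv) for any two $n$-labels $i,i'$, the number of occurrences of three consecutive vertices labelled $i,\emptyset,i'$ equals the number of occurrences of three consecutive vertices labelled $i',\emptyset,i$. Let $\tilde k$ be the number of $p$-vertices with non-empty label, $\tilde r$ the number of distinct $n$-labels and $\tilde c$ the number of distinct $p$-labels. The excess is $\tilde\Delta(\tilde M)=\frac{L+\tilde k}2+1-\tilde r-\frac{\tilde c}{\ell}$. *)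

From mathcomp Require Import all_boot all_order all_algebra.
Set Implicit Arguments. Unset Strict Implicit. Unset Printing Implicit Defensive.
Import Order.TTheory GRing.Theory Num.Theory.

(* An L-graph: a cycle  n_0 - p_0 - n_1 - p_1 - ... - n_{L-1} - p_{L-1} - n_0
   with 2L vertices. The n-vertices and the p-vertices are both indexed by 'I_L;
   p-vertex j is adjacent to n-vertex j and n-vertex (j+1 mod L) = ordS j.
   Its 2L edges are (n_j, p_j) and (n_{j+1}, p_j), j : 'I_L.

   A (p,n,l)-labelling: nl : 'I_L -> 'I_n  (n-labels in [n], 0-based),
   pl : 'I_L -> option (l.-tuple 'I_p)  (None = the empty label). *)

Section Labelling.
Variables (p n l L : nat).
Variables (nl : 'I_L -> 'I_n) (pl : 'I_L -> option (l.-tuple 'I_p)).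

Definition plab_has (j : 'I_L) (b : 'I_p) : bool :=
  if pl j is Some t then b \in t else false.

Definition edge_count (a : 'I_n) (b : 'I_p) : nat :=
  \sum_(j : 'I_L | plab_has j b) ((nl j == a) + (nl (ordS j) == a)).

(* number of occurrences of three consecutive vertices labelled a, (empty), a'
   (read along the fixed orientation of the cycle) *)
Definition empty_pattern_count (a a' : 'I_n) : nat :=
  #|[set j : 'I_L | (pl j == None) && (nl j == a) && (nl (ordS j) == a')]|.

Definition simple_labelling : Prop :=
  [/\ (forall j : 'I_L, nl j != nl (ordS j)),
      (forall j : 'I_L, forall t, pl j = Some t -> uniq t),
      (forall (a : 'I_n) (b : 'I_p), ~~ odd (edge_count a b)) &
      (forall a a' : 'I_n, empty_pattern_count a a' = empty_pattern_count a' a)].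

Definition k_tilde : nat := #|[set j : 'I_L | pl j != None]|.
Definition r_tilde : nat := #|[set nl j | j : 'I_L]|.
Definition c_tilde : nat := #|[set b : 'I_p | [exists j : 'I_L, plab_has j b]]|.

Definition excess : rat :=
  ((L + k_tilde)%:R / 2%:R + 1 - r_tilde%:R - c_tilde%:R / l%:R)%R.

End Labelling.

From mathcomp Require Import all_boot all_order all_algebra zify ring.
Set Implicit Arguments. Unset Strict Implicit. Unset Printing Implicit Defensive.
Import Order.TTheory GRing.Theory Num.Theory.

(* Work over F_2 with the edge vectors x_j = e_(nl j) + e_(nl (j+1)), one per
   p-vertex j.  Condition (iii) says that, for every p-label b, the x_j with b in
   the label of j sum to 0; so the matrix T whose rows are these label
   indicators, together with the indicators of the empty p-vertices, annihilates
   the matrix N of the x_j at non-empty p-vertices, and rank T + rank N <= L.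
   A set of rank T columns on which no nonzero vector of the row space of T
   vanishes must contain every empty p-vertex and, for every p-label, a vertex
   carrying it; as a vertex carries at most l labels, c + l (L - k) <= l rank T.
   By conditions (i) and (iv) every empty p-vertex has the same x_j as one whose
   n-labels increase along the cycle, and these are half of the L - k empty
   vertices, so rank X <= rank N + (L - k)/2 for the matrix X of all the x_j.
   Finally the cycle is connected, so X and a single e_a span every e_(nl j),
   whence r <= rank X + 1.  Chaining these bounds gives
   c + l r <= l (L + k)/2 + l, i.e. a nonnegative excess. *)

Lemma leq_card_bigcup (I T : finType) (P : {pred I}) (S : I -> {set T}) :
  #|\bigcup_(i in P) S i| <= \sum_(i in P) #|S i|.
Proof.
elim/big_rec2: _ => [|i n U _ leUn]; first by rewrite cards0.
by rewrite (leq_trans (leq_card_setU _ _).1) ?leq_add2l.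
Qed.

Lemma ordS_ind (L : nat) (j0 : 'I_L) (P : 'I_L -> Prop) :
  val j0 = 0 -> P j0 -> (forall j, P j -> P (ordS j)) -> forall j, P j.
Proof.
move=> j0_0 Pj0 PS [k]; elim: k => [|k IHk] ltkL.
  by rewrite (_ : Ordinal ltkL = j0) //; apply: val_inj.
by have := PS _ (IHk (ltnW ltkL)); congr P; apply: val_inj; rewrite /= modn_small.
Qed.

Section LinearAlgebra.
Local Open Scope ring_scope.

Lemma addmx_pchar2 (R : nzSemiRingType) (m n : nat) (A : 'M[R]_(m, n)) :
  2%N \in [pchar R] -> A + A = 0.
Proof. by move=> pchar2; apply/matrixP => i j; rewrite !mxE addrr_pchar2. Qed.

Lemma rowspace_support_cover (F : fieldType) (m N : nat) (M : 'M[F]_(m, N)) :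
  exists2 C : {set 'I_N}, (#|C| <= \rank M)%N &
    forall v : 'rV_N, (v <= M)%MS -> v != 0 -> exists2 j, j \in C & v 0 j != 0.
Proof.
pose f := maxrankfun M^T; pose C := [set f i | i : 'I_(\rank M^T)].
exists C.
  by apply: leq_trans (leq_imset_card _ _) _; rewrite card_ord mxrank_tr.
move=> _ /submxP[u ->] nz_uM.
have [/exists_inP[j Cj nz_j] | /exists_inPn uM0] :=
  boolP [exists j in C, (u *m M) 0 j != 0]; first by exists j.
case/eqP: nz_uM.
have /submxP[K defMt] : (M^T <= rowsub f M^T)%MS by rewrite eq_maxrowsub.
have -> : M = colsub f M *m K^T by apply: trmx_inj; rewrite trmx_mul trmx_mxsub trmxK.
rewrite mulmxA mulmx_colsub.
suff -> : colsub f (u *m M) = 0 by rewrite mul0mx.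
apply/rowP => i; rewrite [LHS]mxE [RHS]mxE; apply/eqP/negbNE/uM0; exact: imset_f.
Qed.

End LinearAlgebra.

Section Labelling.
Variables (p n l L : nat).
Variables (nl : 'I_L -> 'I_n) (pl : 'I_L -> option (l.-tuple 'I_p)).

Section Matrices.
Local Open Scope ring_scope.

Definition edge_vec (j : 'I_L) : 'rV['F_2]_n :=
  delta_mx 0 (nl j) + delta_mx 0 (nl (ordS j)).

Definition edge_mx : 'M['F_2]_(L, n) := \matrix_j edge_vec j.

Definition labelled_edge_mx : 'M['F_2]_(L, n) :=
  \matrix_j (if pl j is Some _ then edge_vec j else 0).

Definition incidence_mx : 'M['F_2]_(p + L, L) :=
  col_mx (\matrix_(b, j) (plab_has pl j b)%:R)
         (diag_mx (\row_j (pl j == None)%:R)).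

Hypothesis edge_count_even : forall a b, ~~ odd (edge_count nl pl a b).

Lemma mul_incidence_labelled_edge_mx : incidence_mx *m labelled_edge_mx = 0.
Proof.
rewrite mul_col_mx mul_diag_mx -col_mx0; congr col_mx; apply/matrixP => b a.
  have count_ab_0 : (edge_count nl pl a b)%:R = 0 :> 'F_2.
    by apply/eqP; rewrite -(dvdn_pcharf (pchar_Fp _)) // dvdn2.
  rewrite [RHS]mxE -count_ab_0 /edge_count natr_sum big_mkcond !mxE.
  apply: eq_bigr => j _; rewrite !mxE /plab_has.
  case: (pl j) => [t|]; last by rewrite mul0r.
  by case: (b \in t); rewrite ?mul0r // mul1r !mxE natrD !eqxx /= !(eq_sym a).
by rewrite !mxE; case: (pl b) => [t|]; rewrite /= ?mxE ?mul0r ?mulr0.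
Qed.

Lemma rank_incidence_labelled_edge :
  (\rank incidence_mx + \rank labelled_edge_mx <= L)%N.
Proof.
rewrite addnC -leq_subRL ?rank_leq_row // -mxrank_ker mxrankS //.
by apply/sub_kermxP; exact: mul_incidence_labelled_edge_mx.
Qed.

Lemma card_plab_has j :
  (#|[set b | plab_has pl j b]| + l * (pl j == None) <= l)%N.
Proof.
rewrite /plab_has; case: (pl j) => [t|]; last by rewrite cards0 muln1.
by rewrite muln0 addn0 cardsE (leq_trans (card_size t)) ?size_tuple.
Qed.

Lemma labels_empties_le_rank :
  (c_tilde pl + l * #|[set j | pl j == None]| <= l * \rank incidence_mx)%N.
Proof.
have [C leCr coverC] := rowspace_support_cover incidence_mx.
have labels_cover : [set b | [exists j, plab_has pl j b]] \subset
                    \bigcup_(j in C) [set b | plab_has pl j b].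
  apply/subsetP => b; rewrite inE => /existsP[j bj].
  have nz_b : row (lshift L b) incidence_mx != 0.
    apply: contraTneq bj => /rowP/(_ j); rewrite mxE col_mxEu !mxE.
    by case: plab_has => // /eqP; rewrite oner_eq0.
  have [j' Cj'] := coverC _ (row_sub _ _) nz_b; rewrite mxE col_mxEu mxE => bj'.
  by apply/bigcupP; exists j' => //; rewrite inE; case: plab_has bj'.
have empties_in_C : [set j | pl j == None] \subset [set j in C | pl j == None].
  apply/subsetP => j; rewrite !inE => ej; rewrite ej andbT.
  have nz_j : row (rshift p j) incidence_mx != 0.
    apply/eqP => /rowP/(_ j)/eqP; rewrite mxE col_mxEd !mxE eqxx ej.
    by rewrite oner_eq0.
  have [j' Cj'] := coverC _ (row_sub _ _) nz_j; rewrite mxE col_mxEd !mxE.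
  by case: (j =P j') Cj' => [-> //|_ _]; rewrite mulr0n eqxx.
apply: leq_trans (leq_add (subset_leq_card labels_cover)
                          (leq_mul (leqnn l) (subset_leq_card empties_in_C))) _.
apply: leq_trans (leq_add (leq_card_bigcup _ _) (leqnn _)) _.
rewrite -sum1dep_card big_mkcondr big_distrr -big_split /=.
apply: (@leq_trans (\sum_(j in C) l)).
  apply: leq_sum => j _; have := card_plab_has j.
  by case: (pl j == None); rewrite ?muln1 ?muln0.
by rewrite sum_nat_const mulnC leq_mul2l leCr orbT.
Qed.

Lemma r_tilde_le_rank_edge : (0 < L)%N -> (r_tilde nl <= \rank edge_mx + 1)%N.
Proof.
move=> L_gt0; pose j0 : 'I_L := Ordinal L_gt0.
pose W := (edge_mx + (delta_mx 0 (nl j0) : 'rV_n))%MS.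
have delta_W j : ((delta_mx 0 (nl j) : 'rV_n) <= W)%MS.
  elim/(@ordS_ind _ j0): j => // [|j delta_j]; first exact: addsmxSr.
  have -> : delta_mx 0 (nl (ordS j)) = edge_vec j + delta_mx 0 (nl j).
    by rewrite /edge_vec addrAC addmx_pchar2 ?pchar_Fp ?add0r.
  apply: addmx_sub delta_j; apply: submx_trans (addsmxSl _ _).
  by apply: (eq_row_sub j); rewrite rowK.
have [C leCr coverC] := rowspace_support_cover W.
have nl_C : [set nl j | j : 'I_L] \subset C.
  apply/subsetP => _ /imsetP[j _ ->].
  have nz_delta : delta_mx 0 (nl j) != 0 :> 'rV['F_2]_n.
    by apply/eqP => /rowP/(_ (nl j))/eqP; rewrite !mxE !eqxx oner_eq0.
  have [a Ca] := coverC _ (delta_W j) nz_delta; rewrite mxE eqxx /=.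
  by case: (a =P nl j) Ca => [<- //|_ _]; rewrite eqxx.
apply: leq_trans (subset_leq_card nl_C) (leq_trans leCr _).
by rewrite (leq_trans (mxrank_adds_leqif _ _).1) // leq_add2l rank_leq_row.
Qed.

Definition ascending_empty : {set 'I_L} :=
  [set j | (pl j == None) && (nl j < nl (ordS j))%N].

Lemma card_empty_pattern (P : pred ('I_n * 'I_n)) :
  #|[set j | (pl j == None) && P (nl j, nl (ordS j))]| =
  (\sum_(x | P x) empty_pattern_count nl pl x.1 x.2)%N.
Proof.
rewrite -sum1dep_card (partition_big (fun j => (nl j, nl (ordS j))) P) => [|j /andP[]//].
apply: eq_bigr => -[a a'] Paa'; rewrite /empty_pattern_count -sum1dep_card.
apply: eq_bigl => j /=; rewrite xpair_eqE -andbA; case: (pl j == None) => //=.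
by case: (nl j =P a) => [->|]; case: (nl (ordS j) =P a') => [->|]; rewrite ?Paa' ?andbF.
Qed.

Hypothesis nl_adj : forall j, nl j != nl (ordS j).
Hypothesis pattern_sym :
  forall a a', empty_pattern_count nl pl a a' = empty_pattern_count nl pl a' a.

Lemma double_card_ascending_empty :
  (2 * #|ascending_empty| = #|[set j | pl j == None]|)%N.
Proof.
pose descending_empty := [set j | (pl j == None) && (nl (ordS j) < nl j)%N].
have card_desc : #|descending_empty| = #|ascending_empty|.
  rewrite (card_empty_pattern [pred x : 'I_n * 'I_n | x.2 < x.1]%N).
  rewrite (card_empty_pattern [pred x : 'I_n * 'I_n | x.1 < x.2]%N).
  rewrite (reindex_inj (can_inj swap_pairK)) /=.
  by apply: eq_bigr => x _; rewrite pattern_sym.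
have -> : [set j | pl j == None] = ascending_empty :|: descending_empty.
  apply/setP => j; rewrite !inE -andb_orr; case: (pl j == None) => //=.
  by have := nl_adj j; rewrite neq_ltn.
rewrite cardsU card_desc (_ : _ :&: _ = set0) ?cards0 ?subn0 ?mul2n ?addnn //.
apply/setP => j; rewrite !inE andbACA andbb; case: (pl j == None) => //=.
by apply/negP => /andP[/ltn_trans/[apply]]; rewrite ltnn.
Qed.

Lemma empty_edge_vec_ascending j : pl j == None ->
  exists2 j', j' \in ascending_empty & edge_vec j' = edge_vec j.
Proof.
move=> ej; case: (ltngtP (nl j) (nl (ordS j))) => [lt_j | gt_j | eq_j].
- by exists j; rewrite // inE ej lt_j.
- have : (0 < empty_pattern_count nl pl (nl (ordS j)) (nl j))%N.
    by rewrite pattern_sym card_gt0; apply/set0Pn; exists j; rewrite !inE ej !eqxx.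
  rewrite card_gt0 => /set0Pn[j']; rewrite !inE => /andP[/andP[ej' /eqP e1] /eqP e2].
  by exists j'; rewrite ?inE ?ej' ?e1 ?e2 ?gt_j // /edge_vec e1 e2 addrC.
- by have := nl_adj j; rewrite -(inj_eq val_inj) /= eq_j eqxx.
Qed.

Lemma rank_edge_le :
  (\rank edge_mx <= \rank labelled_edge_mx + #|ascending_empty|)%N.
Proof.
pose asc := @enum_val _ (mem ascending_empty).
have edge_sub : (edge_mx <= labelled_edge_mx + rowsub asc edge_mx)%MS.
  apply/row_subP => j; rewrite rowK.
  case ej: (pl j) => [t|].
    by apply: submx_trans (addsmxSl _ _); apply: (eq_row_sub j); rewrite rowK ej.
  have [j' asc_j' <-] := empty_edge_vec_ascending (introT eqP ej).
  apply: submx_trans (addsmxSr _ _); apply: (eq_row_sub (enum_rank_in asc_j' j')).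
  by rewrite row_rowsub rowK /asc enum_rankK_in.
apply: leq_trans (mxrankS edge_sub) _.
by rewrite (leq_trans (mxrank_adds_leqif _ _).1) // leq_add2l rank_leq_row.
Qed.

End Matrices.

Lemma k_tilde_add_empty : k_tilde pl + #|[set j | pl j == None]| = L.
Proof.
rewrite /k_tilde -[RHS](card_ord L) -(cardsC [set j | pl j != None]).
by congr addn; apply: eq_card => j; rewrite !inE negbK.
Qed.

Lemma excess_ge0_of_bound : 0 < l ->
  2 * c_tilde pl + 2 * l * r_tilde nl <= l * (L + k_tilde pl) + 2 * l ->
  (0 <= excess nl pl)%R.
Proof.
move=> l_gt0 bound; rewrite /excess.
set k := k_tilde pl; set r := r_tilde nl; set c := c_tilde pl.
rewrite -(pmulr_rge0 _ (_ : (0 < (2 * l)%:R :> rat)%R)) ?ltr0n ?muln_gt0 //.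
have -> : ((2 * l)%:R * ((L + k)%:R / 2%:R + 1 - r%:R - c%:R / l%:R) =
           (l * (L + k) + 2 * l)%:R - (2 * c + 2 * l * r)%:R :> rat)%R.
  by rewrite !natrD !natrM; field; rewrite pnatr_eq0 -lt0n.
by rewrite subr_ge0 ler_nat.
Qed.

End Labelling.

Theorem lemma3p13 (p n l L : nat) (hl : (0 < l)%N) (hL : (2 <= L)%N)
  (nl : 'I_L -> 'I_n) (pl : 'I_L -> option (l.-tuple 'I_p)) :
  simple_labelling nl pl -> (0 <= excess nl pl)%R.
Proof.
case=> nl_adj _ edge_even pattern_sym; apply: excess_ge0_of_bound => //.
have := rank_incidence_labelled_edge edge_even.
have := labels_empties_le_rank pl.
have := rank_edge_le nl_adj pattern_sym.
have := double_card_ascending_empty nl_adj pattern_sym.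
have := r_tilde_le_rank_edge nl (ltnW hL).
have := k_tilde_add_empty pl.
nia.
Qed.
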